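(* Let $m\ge0$ and let $f:\mathbb{R}^n\to\mathbb{R}$ be $m$-weakly convex and $L$-Lipschitz continuous with $f^\star:=\inf_xf(x)>-\infty$. Run the proximal descent method (defined in the context) with $\beta\in(0,1)$, $\rho>0$, $\alpha=m+\rho$, from $x_1\in\mathbb{R}^n$. Let $\eta>0$, $\epsilon>0$, and let $k^\star$ be the smallest index such that $x_{k^\star}$ is an $(\eta,\epsilon)$-inexact stationary point. Then $k^\star\le K_{\max}(\eta,\epsilon)+1$ and the total number of function and subgradient evaluations performed before reaching $x_{k^\star}$ satisfies $$\sum_{i=1}^{k^\star-1}T_i\le\frac{8K_{\max}(\eta,\epsilon)}{(1-\beta)^2\rho}\Big(1+\frac m\rho\Big)^2L^2\max\Big\{\frac{2\rho}{\eta^2},\frac1\epsilon\Big\},$$ where $K_{\max}(\eta,\epsilon)=\Big\lceil\frac{2\alpha^2(f(x_1)-f^\star)}{m+\beta\rho}\frac1{\eta^2}+\frac{(1-\beta)(f(x_1)-f^\star)}{\beta}\frac1\epsilon+1\Big\rceil$.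
   Context: A function $f$ is $m$-weakly convex ($m\ge 0$) if $x\mapsto f(x)+\frac{m}{2}\|x\|^2$ is convex; its subdifferential is $\partial f(x)=\{v: f(y)\ge f(x)+\langle v,y-x\rangle-\frac{m}{2}\|y-x\|^2\ \forall y\}$, and for $\epsilon\ge0$, $\partial_\epsilon f(x)=\{v: f(y)\ge f(x)+\langle v,y-x\rangle-\frac{m}{2}\|y-x\|^2-\epsilon\ \forall y\}$. A point $x$ is an $(\eta,\epsilon)$-inexact stationary point if $\mathrm{dist}(0,\partial_\epsilon f(x))\le\eta$. Subroutine ProxDescent$(x_k,\beta,\rho)$: set $j=1$, choose $g_1\in\partial f(x_k)$, let $\tilde f_1(x)=f(x_k)+\langle g_1,x-x_k\rangle$, and compute $z_2=\arg\min_x\{\tilde f_1(x)+\frac\rho2\|x-x_k\|^2\}$. While $f(x_k)-\big(f(z_{j+1})+\frac m2\|z_{j+1}-x_k\|^2\big)<\beta\big(f(x_k)-\tilde f_j(z_{j+1})\big)$: choose $g_{j+1}$ with $g_{j+1}-m(z_{j+1}-x_k)\in\partial f(z_{j+1})$ and a convex $\tilde f_{j+1}:\mathbb{R}^n\to\mathbb{R}$ such that for all $x$: (i) $\tilde f_{j+1}(x)\le f(x)+\frac m2\|x-x_k\|^2$; (ii) $\tilde f_{j+1}(x)\ge\tilde f_j(z_{j+1})+\langle s_{j+1},x-z_{j+1}\rangle$ with $s_{j+1}=\rho(x_k-z_{j+1})$; (iii) $\tilde f_{j+1}(x)\ge f(z_{j+1})+\frac m2\|z_{j+1}-x_k\|^2+\langle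 g_{j+1},x-z_{j+1}\rangle$; compute $z_{j+2}=\arg\min_x\{\tilde f_{j+1}(x)+\frac\rho2\|x-x_k\|^2\}$ and increase $j$ by one. On exit, return $z_{j+1}$. $T_k$ denotes the number of trial points $z_2,\dots,z_{T_k+1}$ computed in the call. The proximal descent method: given $x_1\in\mathbb{R}^n$, set $x_{k+1}=$ ProxDescent$(x_k,\beta,\rho)$ for $k=1,2,\dots$; each trial point costs one function value and one subgradient evaluation, so $\sum_i T_i$ counts evaluations. *)

From HB Require Import structures.
From mathcomp Require Import all_boot all_order all_algebra.
From mathcomp Require Import reals.
Set Implicit Arguments. Unset Strict Implicit. Unset Printing Implicit Defensive.
Import Order.TTheory GRing.Theory Num.Theory.
Local Open Scope ring_scope.

Section Defs.
Variables (R : realType) (n : nat).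
Local Notation vec := 'rV[R]_n.

Definition dot (u v : vec) : R := \sum_(i < n) u ord0 i * v ord0 i.
Definition vnorm (u : vec) : R := Num.sqrt (dot u u).

Definition convex_fun (h : vec -> R) : Prop :=
  forall (x y : vec) (t : R), 0 <= t -> t <= 1 ->
    h (t *: x + (1 - t) *: y) <= t * h x + (1 - t) * h y.

Definition weakly_convex (m : R) (f : vec -> R) : Prop :=
  convex_fun (fun x => f x + m / 2 * vnorm x ^+ 2).

Definition lipschitz (L : R) (f : vec -> R) : Prop :=
  forall x y : vec, `|f x - f y| <= L * vnorm (x - y).

Definition subdiff (m : R) (f : vec -> R) (x v : vec) : Prop :=
  forall y : vec, f x + dot v (y - x) - m / 2 * vnorm (y - x) ^+ 2 <= f y.

Definition esubdiff (m eps : R) (f : vec -> R) (x v : vec) : Prop :=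
  forall y : vec, f x + dot v (y - x) - m / 2 * vnorm (y - x) ^+ 2 - eps <= f y.

(* dist(0, \partial_eps f(x)) <= eta, with dist the infimum of norms
   (equal to +oo if the set is empty) *)
Definition inexact_stationary (m eta eps : R) (f : vec -> R) (x : vec) : Prop :=
  forall d : R, 0 < d -> exists v : vec, esubdiff m eps f x v /\ vnorm v < eta + d.

Definition is_prox_min (ft : vec -> R) (rho : R) (xk z : vec) : Prop :=
  forall y : vec, ft z + rho / 2 * vnorm (z - xk) ^+ 2 <= ft y + rho / 2 * vnorm (y - xk) ^+ 2.

(* the while-loop test of ProxDescent at inner index j (uses z_{j+1}, ft_j) *)
Definition pd_continue (f : vec -> R) (m beta : R) (xk : vec)
    (ft : nat -> vec -> R) (z : nat -> vec) (j : nat) : Prop :=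
  f xk - (f (z j.+1) + m / 2 * vnorm (z j.+1 - xk) ^+ 2)
    < beta * (f xk - ft j (z j.+1)).

(* A (possibly non-terminating) execution of ProxDescent(xk, beta, rho):
   g j, ft j, z j are g_j, \tilde f_j, z_j (indices from 1 resp. 2).
   The constraints on step j+1 are only imposed while the loop is running. *)
Definition pd_trace (f : vec -> R) (m beta rho : R) (xk : vec)
    (g : nat -> vec) (ft : nat -> vec -> R) (z : nat -> vec) : Prop :=
  [/\ subdiff m f xk (g 1%N),
      (forall y, ft 1%N y = f xk + dot (g 1%N) (y - xk)),
      is_prox_min (ft 1%N) rho xk (z 2%N) &
      forall j : nat, (1 <= j)%N ->
        (forall j', (1 <= j' <= j)%N -> pd_continue f m beta xk ft z j') ->
        [/\ subdiff m f (z j.+1) (g j.+1 - m *: (z j.+1 - xk)) /\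
              convex_fun (ft j.+1),
            (forall y, ft j.+1 y <= f y + m / 2 * vnorm (y - xk) ^+ 2),
            (forall y, ft j (z j.+1) + dot (rho *: (xk - z j.+1)) (y - z j.+1)
                         <= ft j.+1 y),
            (forall y, f (z j.+1) + m / 2 * vnorm (z j.+1 - xk) ^+ 2
                         + dot (g j.+1) (y - z j.+1) <= ft j.+1 y) &
            is_prox_min (ft j.+1) rho xk (z j.+2)]].

(* the loop exits after exactly T trial points z_2, ..., z_{T+1} *)
Definition pd_exits_at (f : vec -> R) (m beta : R) (xk : vec)
    (ft : nat -> vec -> R) (z : nat -> vec) (T : nat) : Prop :=
  [/\ (1 <= T)%N, ~ pd_continue f m beta xk ft z T &
      forall j, (1 <= j < T)%N -> pd_continue f m beta xk ft z j].

Definition pd_terminates (f : vec -> R) (m beta : R) (xk : vec)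
    (ft : nat -> vec -> R) (z : nat -> vec) : Prop :=
  exists T, pd_exits_at f m beta xk ft z T.

(* An execution of the proximal descent method from x1: for every k >= 1 the
   call ProxDescent(x k, beta, rho) has trace (g k, ft k, z k); if it
   terminates, T k is its number of trial points and x (k+1) its output. *)
Definition prox_descent_run (f : vec -> R) (m beta rho : R) (x1 : vec)
    (x : nat -> vec) (g : nat -> nat -> vec) (ft : nat -> nat -> vec -> R)
    (z : nat -> nat -> vec) (T : nat -> nat) : Prop :=
  x 1%N = x1 /\
  forall k : nat, (1 <= k)%N ->
    pd_trace f m beta rho (x k) (g k) (ft k) (z k) /\
    (pd_terminates f m beta (x k) (ft k) (z k) ->
       pd_exits_at f m beta (x k) (ft k) (z k) (T k) /\ x k.+1 = z k (T k).+1).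

End Defs.

From HB Require Import structures.
From mathcomp Require Import all_boot all_order all_algebra.
From mathcomp Require Import reals.
From mathcomp Require Import ring lra.
From Stdlib Require Import Classical.
Import Order.TTheory GRing.Theory Num.Theory.
Set Implicit Arguments. Unset Strict Implicit. Unset Printing Implicit Defensive.
Local Open Scope ring_scope.

(* Within one call of ProxDescent at a non-stationary [xk], look at the gap
   between [f xk] and the optimal value of the current proximal subproblem.
   Non-stationarity keeps the gap above [min (eta^2 / (2 rho)) eps]; a null step
   combines the aggregated cut of the old model with the subgradient cut at the
   trial point, which shrinks the gap quadratically, [D' <= D - c D^2].  Hence
   [1 / D] grows linearly, which bounds the length of the call.  A serious step
   either moves far, and the descent test then lowers [f] by a fixed amount, or
   leaves a small model error, and then the proximal step certifies that the new
   iterate is stationary.  As [f >= fstar], only [Kmax] serious steps can precede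
   the first stationary iterate. *)

Section InnerProduct.
Variables (R : realType) (n : nat).
Implicit Types (u v w : 'rV[R]_n) (a t : R).

Lemma dotC u v : dot u v = dot v u.
Proof. by apply: eq_bigr => i _; rewrite mulrC. Qed.

Lemma dotDl u v w : dot (u + v) w = dot u w + dot v w.
Proof. by rewrite /dot -big_split; apply: eq_bigr => i _; rewrite !mxE mulrDl. Qed.

Lemma dotZl a u w : dot (a *: u) w = a * dot u w.
Proof. by rewrite /dot mulr_sumr; apply: eq_bigr => i _; rewrite !mxE mulrA. Qed.

Lemma dotNl u w : dot (- u) w = - dot u w.
Proof. by rewrite -scaleN1r dotZl mulN1r. Qed.

Lemma dotBl u v w : dot (u - v) w = dot u w - dot v w.
Proof. by rewrite dotDl dotNl. Qed.

Lemma dotDr u v w : dot w (u + v) = dot w u + dot w v.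
Proof. by rewrite dotC dotDl !(dotC w). Qed.

Lemma dotZr a u w : dot w (a *: u) = a * dot w u.
Proof. by rewrite dotC dotZl dotC. Qed.

Lemma dotNr u w : dot w (- u) = - dot w u.
Proof. by rewrite dotC dotNl dotC. Qed.

Lemma dotBr u v w : dot w (u - v) = dot w u - dot w v.
Proof. by rewrite dotC dotBl !(dotC w). Qed.

Lemma dot0l w : dot 0 w = 0.
Proof. by rewrite -(scale0r (0 : 'rV[R]_n)) dotZl mul0r. Qed.

Lemma dotNN u v : dot (- u) (- v) = dot u v.
Proof. by rewrite dotNl dotNr opprK. Qed.

Lemma dot_subC u v : dot (u - v) (u - v) = dot (v - u) (v - u).
Proof. by rewrite -opprB dotNN. Qed.

Lemma dot_ge0 u : 0 <= dot u u.
Proof. by apply: sumr_ge0 => i _; rewrite -expr2 sqr_ge0. Qed.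

Lemma dot_addZ u v t :
  dot (u + t *: v) (u + t *: v) = dot u u + 2 * t * dot u v + t ^+ 2 * dot v v.
Proof. rewrite dotDl !dotDr !dotZl !dotZr (dotC v u); ring. Qed.

Lemma dot_sqD u v : dot (u + v) (u + v) = dot u u + 2 * dot u v + dot v v.
Proof. by rewrite dotDl !dotDr (dotC v u); ring. Qed.

Lemma dot_sqD_le u v : dot (u + v) (u + v) <= 2 * dot u u + 2 * dot v v.
Proof. by have := dot_ge0 (u - v); rewrite !dotBl !dotBr !dotDl !dotDr (dotC v u); lra. Qed.

Lemma vnorm_ge0 u : 0 <= vnorm u.
Proof. exact: sqrtr_ge0. Qed.

Lemma vnorm_sq u : vnorm u ^+ 2 = dot u u.
Proof. by rewrite sqr_sqrtr // dot_ge0. Qed.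

Lemma vnormZ t u : 0 <= t -> vnorm (t *: u) = t * vnorm u.
Proof.
move=> t_ge0; apply/eqP; rewrite -(@eqrXn2 _ 2) ?mulr_ge0 ?vnorm_ge0 //.
by rewrite exprMn !vnorm_sq dotZl dotZr mulrA -expr2.
Qed.

Lemma vnorm_le_sq u r : 0 <= r -> dot u u <= r ^+ 2 -> vnorm u <= r.
Proof. by move=> r_ge0; rewrite -vnorm_sq ler_pXn2r // nnegrE vnorm_ge0. Qed.

End InnerProduct.

Section ScalarFacts.
Variable R : realFieldType.
Implicit Types (a b c d A C D G rho w W : R).

Lemma le0_of_le_scale A C :
  0 <= C -> (forall t, 0 < t -> t <= 1 -> A <= t * C) -> A <= 0.
Proof.
move=> C_ge0 H; case: (lerP A 0) => // A_gt0.
have CA_gt0 : 0 < C + A by lra.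
have t_gt0 : 0 < A / (C + A) by apply: divr_gt0.
have t_le1 : A / (C + A) <= 1 by rewrite ler_pdivrMr //; lra.
have := H _ t_gt0 t_le1; rewrite mulrAC ler_pdivlMr // => h.
have : A * C + A * A <= A * C by nra.
nra.
Qed.

(* Evaluate at the feasible point [lam = rho * a / W], where the two terms
   balance. *)
Lemma quadratic_max_lower_bound rho a W d :
  0 < rho -> 0 < a -> rho * a <= W ->
  (forall lam, 0 <= lam -> lam <= 1 -> lam * a - lam ^+ 2 * W / (2 * rho) <= d) ->
  rho * a ^+ 2 / (2 * W) <= d.
Proof.
move=> rho_gt0 a_gt0 aW H.
have W_gt0 : 0 < W by apply: lt_le_trans aW; rewrite mulr_gt0.
have lam_ge0 : 0 <= rho * a / W by rewrite divr_ge0 ?mulr_ge0 // ltW.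
have lam_le1 : rho * a / W <= 1 by rewrite ler_pdivrMr // mul1r.
apply: le_trans (H _ lam_ge0 lam_le1); rewrite le_eqVlt; apply/orP; left; apply/eqP.
by field; rewrite !gt_eqF.
Qed.

Lemma inv_add_le_of_quadratic_decrease D (D' : R) c :
  0 < D -> 0 < D' -> 0 <= c -> D' <= D - c * D ^+ 2 -> 1 / D + c <= 1 / D'.
Proof.
move=> D_gt0 D'_gt0 c_ge0 dec.
have -> : 1 / D + c = (1 + c * D) / D by field; lra.
rewrite ler_pdivlMr // mulrC mulrA ler_pdivrMr // mul1r.
have : D' * (1 + c * D) <= (D - c * D ^+ 2) * (1 + c * D) by apply: ler_wpM2r => //; nra.
have : 0 <= c ^+ 2 * D ^+ 3 by rewrite mulr_ge0 ?sqr_ge0 ?exprn_ge0 ?ltW.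
have -> : (D - c * D ^+ 2) * (1 + c * D) = D - c ^+ 2 * D ^+ 3 by ring.
lra.
Qed.

Lemma inv_iter_quadratic_decrease (D : nat -> R) c J :
  0 <= c -> (forall j, (1 <= j <= J.+1)%N -> 0 < D j) ->
  (forall j, (1 <= j <= J)%N -> D j.+1 <= D j - c * D j ^+ 2) ->
  1 / D 1%N + J%:R * c <= 1 / D J.+1.
Proof.
move=> c_ge0; elim: J => [|J IH] D_gt0 dec; first by rewrite mul0r addr0.
have IHJ : 1 / D 1%N + J%:R * c <= 1 / D J.+1.
  apply: IH => j /andP[j_ge1 j_le]; [apply: D_gt0 | apply: dec];
    by rewrite j_ge1 (leq_trans j_le).
have : 1 / D J.+1 + c <= 1 / D J.+2.
  apply: inv_add_le_of_quadratic_decrease => //.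
  - by apply: D_gt0; rewrite /= ltnW.
  - by apply: D_gt0; rewrite /=.
  - by apply: dec; rewrite /=.
rewrite -natr1 mulrDl mul1r; lra.
Qed.

Lemma inv_lt_max_inv a b d :
  0 < a -> 0 < b -> a < d \/ b < d -> 1 / d < Num.max (1 / a) (1 / b).
Proof.
move=> a_gt0 b_gt0 ad_bd; rewrite lt_max !div1r.
case: ad_bd => [ad|bd]; apply/orP; [left|right]; rewrite ltf_pV2 ?posrE //.
- exact: lt_trans ad.
- exact: lt_trans bd.
Qed.

Lemma lt_mul_add_inv a b d : 0 < a -> 0 < b -> a < d \/ b < d -> 1 < d * (1 / a + 1 / b).
Proof.
move=> a_gt0 b_gt0 ad_bd.
have d_gt0 : 0 < d by case: ad_bd => h; [exact: lt_trans h | exact: lt_trans h].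
have := inv_lt_max_inv a_gt0 b_gt0 ad_bd.
rewrite ltr_pdivrMr // => h; rewrite mulrC.
have a'_ge0 : 0 <= 1 / a by rewrite divr_ge0 ?ltW.
have b'_ge0 : 0 <= 1 / b by rewrite divr_ge0 ?ltW.
have : Num.max (1 / a) (1 / b) <= 1 / a + 1 / b by rewrite ge_max; apply/andP; split; lra.
move/(ler_wpM2r (ltW d_gt0)); lra.
Qed.

End ScalarFacts.

Lemma all_or_first_counterexample (P : nat -> Prop) (N : nat) :
  (forall j, (1 <= j <= N)%N -> P j) \/
  exists T, [/\ (1 <= T <= N)%N, ~ P T & forall j, (1 <= j < T)%N -> P j].
Proof.
elim: N => [|N [all_P|[T [T_le not_PT before]]]]; first by left => -[|j].
- case: (classic (P N.+1)) => [PN|not_PN]; last by right; exists N.+1; split => //; rewrite leqnn.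
  left => j /andP[j_ge1]; rewrite leq_eqVlt => /orP[/eqP -> //|j_lt].
  by apply: all_P; rewrite j_ge1.
- by right; exists T; split => //; case/andP: T_le => -> /leqW.
Qed.

Section ConvexModels.
Variables (R : realType) (n : nat).
Local Notation vec := 'rV[R]_n.

(* Compare [z] with the points [z + t (y - z)] of the segment and let [t]
   tend to [0]. *)
Lemma prox_min_subgrad (ft : vec -> R) (rho : R) (xk z : vec) :
  0 < rho -> convex_fun ft -> is_prox_min ft rho xk z ->
  forall y, ft z + dot (rho *: (xk - z)) (y - z) <= ft y.
Proof.
move=> rho_gt0 ft_cvx z_min y.
set P := dot (z - xk) (y - z); set D := dot (y - z) (y - z).
have -> : dot (rho *: (xk - z)) (y - z) = - rho * P.
  by rewrite /P -opprB dotZl dotNl mulrN mulNr.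
suff : ft z - ft y - rho * P <= 0 by lra.
apply: (@le0_of_le_scale _ _ (rho / 2 * D)); first by rewrite mulr_ge0 ?dot_ge0 //; lra.
move=> t t_gt0 t_le1.
have segment : t *: y + (1 - t) *: z - xk = (z - xk) + t *: (y - z).
  by apply/rowP => i; rewrite !mxE; ring.
have := ft_cvx y z t (ltW t_gt0) t_le1.
have := z_min (t *: y + (1 - t) *: z).
rewrite !vnorm_sq segment dot_addZ -/P -/D => h1 h2.
have : t * (ft z - ft y - rho * P) <= t * (t * (rho / 2 * D)) by nra.
by rewrite ler_pM2l.
Qed.

Lemma subdiff_lipschitz_dot_le (f : vec -> R) (m L : R) (z v : vec) :
  0 <= m -> lipschitz L f -> subdiff m f z v -> dot v v <= L ^+ 2.
Proof.
move=> m_ge0 f_lip v_sub; rewrite -vnorm_sq.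
have N_ge0 := vnorm_ge0 v.
have [N_le0|N_gt0] := lerP (vnorm v) 0.
  have -> : vnorm v = 0 by apply/eqP; rewrite eq_le N_le0.
  by rewrite expr0n sqr_ge0.
suff NL : vnorm v <= L by rewrite ler_pXn2r // nnegrE; lra.
suff : vnorm v - L <= 0 by lra.
apply: (@le0_of_le_scale _ _ (m / 2 * vnorm v)); first by rewrite mulr_ge0 //; lra.
move=> t t_gt0 t_le1.
have step : z + t *: v - z = t *: v by apply/rowP => i; rewrite !mxE; ring.
have := v_sub (z + t *: v); rewrite step dotZr vnorm_sq dotZl dotZr -vnorm_sq => h.
have := f_lip (z + t *: v) z; rewrite step (vnormZ _ (ltW t_gt0)) => hlip.
have := ler_norm (f (z + t *: v) - f z).
set N := vnorm v in h hlip N_gt0 N_ge0 *.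
move=> hnorm.
have : t * (N * N) <= t * (N * (L + t * (m / 2 * N))) by nra.
rewrite ler_pM2l // ler_pM2l //; lra.
Qed.

(* A model lying above both cutting planes at [y] improves the proximal value
   by at least the best convex combination of the two cuts. *)
Lemma prox_two_cuts (rho a0 c b lam : R) (xk z y g : vec) :
  0 < rho -> 0 <= lam -> lam <= 1 ->
  a0 + dot (rho *: (xk - z)) (y - z) <= b -> c + dot g (y - z) <= b ->
  lam * (c - a0) - lam ^+ 2 * dot (g + rho *: (z - xk)) (g + rho *: (z - xk)) / (2 * rho)
    <= (b + rho / 2 * dot (xk - y) (xk - y)) - (a0 + rho / 2 * dot (xk - z) (xk - z)).
Proof.
move=> rho_gt0 lam_ge0 lam_le1 cut1 cut2.
set d := y - z in cut1 cut2 *; set e := z - xk; set w := g + rho *: e.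
have {}cut1 : a0 - rho * dot d e <= b.
  by move: cut1; rewrite -[xk - z]opprB -/e dotZl dotNl (dotC e d) mulrN.
have -> : xk - y = - (d + e) by rewrite /d /e; apply/rowP => i; rewrite !mxE; ring.
have -> : xk - z = - e by rewrite opprB.
have wd : dot d w = dot g d + rho * dot d e by rewrite /w dotDr dotZr dotC.
have := dot_ge0 (rho *: d + lam *: w).
rewrite dot_sqD !dotZl !dotZr wd !dotNN dot_sqD.
move=> hsq.
set de := dot d e in cut1 hsq *; set dd := dot d d in hsq *.
set gd := dot g d in cut2 hsq; set ww := dot w w in hsq *.
have : 0 <= lam * (b - (c + gd)) by rewrite mulr_ge0 //; lra.
have : 0 <= (1 - lam) * (b - (a0 - rho * de)) by rewrite mulr_ge0 //; lra.
move=> h1 h2.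
suff : 0 <= 2 * rho * ((b + rho / 2 * (dd + 2 * de + dot e e))
         - (a0 + rho / 2 * dot e e) - (lam * (c - a0) - lam ^+ 2 * ww / (2 * rho))).
  by rewrite pmulr_rge0; lra.
have -> : 2 * rho * ((b + rho / 2 * (dd + 2 * de + dot e e))
         - (a0 + rho / 2 * dot e e) - (lam * (c - a0) - lam ^+ 2 * ww / (2 * rho)))
   = 2 * rho * (b - a0 + rho * de - lam * (c - a0)) + rho ^+ 2 * dd + lam ^+ 2 * ww.
  by field; lra.
nra.
Qed.

Lemma shifted_subgrad_dot_le (m rho L : R) (v e : vec) :
  0 <= m -> 0 < rho -> dot (v - m *: e) (v - m *: e) <= L ^+ 2 ->
  rho ^+ 2 * dot e e <= L ^+ 2 ->
  dot (v + rho *: e) (v + rho *: e) <= 4 * L ^+ 2 * (m + rho) ^+ 2 / rho ^+ 2.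
Proof.
move=> m_ge0 rho_gt0 v_le e_le.
have -> : v + rho *: e = (v - m *: e) + (m + rho) *: e.
  by apply/rowP => i; rewrite !mxE; ring.
apply: le_trans (dot_sqD_le _ _) _; rewrite dotZl dotZr [_ * (_ * dot e e)]mulrA -expr2.
have rho2_gt0 : 0 < rho ^+ 2 by rewrite exprn_gt0.
have : (m + rho) ^+ 2 * (rho ^+ 2 * dot e e) <= (m + rho) ^+ 2 * L ^+ 2.
  by rewrite ler_wpM2l ?sqr_ge0.
have : rho ^+ 2 * L ^+ 2 <= (m + rho) ^+ 2 * L ^+ 2.
  by rewrite ler_wpM2r ?sqr_ge0 // ler_pXn2r ?nnegrE //; lra.
have : rho ^+ 2 * dot (v - m *: e) (v - m *: e) <= rho ^+ 2 * L ^+ 2 by rewrite ler_wpM2l ?sqr_ge0.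
rewrite ler_pdivlMr //; nra.
Qed.

(* The proximal step rescaled by [m + rho] certifies inexact stationarity of
   the proximal point, with [eps] absorbing the model error at [z]. *)
Lemma prox_cut_inexact_stationary (f : vec -> R) (m rho eta eps a0 : R) (xk z : vec) :
  0 <= m -> 0 < rho -> 0 < eta ->
  (forall y, a0 + dot (rho *: (xk - z)) (y - z) <= f y + m / 2 * dot (y - xk) (y - xk)) ->
  (m + rho) ^+ 2 * dot (xk - z) (xk - z) <= eta ^+ 2 ->
  f z + m / 2 * dot (xk - z) (xk - z) - a0 <= eps ->
  inexact_stationary m eta eps f z.
Proof.
move=> m_ge0 rho_gt0 eta_gt0 cut small_step small_err d d_gt0.
exists ((m + rho) *: (xk - z)); split; last first.
  suff : vnorm ((m + rho) *: (xk - z)) <= eta by lra.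
  apply: vnorm_le_sq; first exact: ltW.
  by rewrite dotZl dotZr mulrA -expr2.
move=> y; have := cut y.
have -> : y - xk = (y - z) + (-1) *: (xk - z) by apply/rowP => i; rewrite !mxE; ring.
rewrite dot_addZ vnorm_sq !dotZl (dotC (y - z)) sqrrN expr1n.
lra.
Qed.

End ConvexModels.

Section ProxDescent.
Variables (R : realType) (n : nat) (f : 'rV[R]_n -> R) (m L beta rho eta eps : R).
Hypotheses (m_ge0 : 0 <= m) (f_lip : lipschitz L f) (rho_gt0 : 0 < rho)
  (beta_gt0 : 0 < beta) (beta_lt1 : beta < 1) (eta_gt0 : 0 < eta) (eps_gt0 : 0 < eps).
Local Notation vec := 'rV[R]_n.

Let eval_bound := 8 / ((1 - beta) ^+ 2 * rho) * (1 + m / rho) ^+ 2 * L ^+ 2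
                  * Num.max (2 * rho / eta ^+ 2) (1 / eps).

Let gap_decay := rho ^+ 3 * (1 - beta) ^+ 2 / (8 * L ^+ 2 * (m + rho) ^+ 2).

Let aggregate_bound := 4 * L ^+ 2 * (m + rho) ^+ 2 / rho ^+ 2.

Lemma eval_bound_ge0 : 0 <= eval_bound.
Proof.
have c_ge0 : 0 <= 8 / ((1 - beta) ^+ 2 * rho).
  by rewrite divr_ge0 ?ler0n // mulr_ge0 ?sqr_ge0 // ltW.
apply: mulr_ge0; last by rewrite le_max div1r invr_ge0 (ltW eps_gt0) orbT.
by rewrite mulr_ge0 ?sqr_ge0 // mulr_ge0 ?sqr_ge0.
Qed.

Lemma gap_decay_ge0 : 0 <= gap_decay.
Proof.
apply: divr_ge0; first by apply: mulr_ge0; [exact: exprn_ge0 (ltW rho_gt0) | exact: sqr_ge0].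
by apply: mulr_ge0; [apply: mulr_ge0 | ]; rewrite ?sqr_ge0.
Qed.

Lemma m_add_rho_gt0 : 0 < m + rho.
Proof. exact: ltr_wpDl m_ge0 rho_gt0. Qed.

Section GapBounds.
Variable D : R.
Hypotheses (D_gt0 : 0 < D) (D_le : D <= L ^+ 2 / (2 * rho)).

Lemma lipschitz_neq0 : L != 0.
Proof.
by apply: contraTneq (lt_le_trans D_gt0 D_le) => ->; rewrite expr0n /= mul0r ltxx.
Qed.

Lemma gap_decay_gt0 : 0 < gap_decay.
Proof.
have alpha_gt0 := m_add_rho_gt0.
apply: divr_gt0; first by rewrite mulr_gt0 ?exprn_gt0 ?subr_gt0.
by rewrite mulr_gt0 ?exprn_gt0 // mulr_gt0 ?ltr0Sn // exprn_even_gt0 ?lipschitz_neq0.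
Qed.

Lemma gap_decay_le_inv : gap_decay <= 1 / D.
Proof.
move: (rho_gt0) (beta_gt0) (beta_lt1) => rho_pos beta_pos beta_lt.
have alpha_gt0 := m_add_rho_gt0.
rewrite ler_pdivlMr //; apply: le_trans (ler_wpM2l gap_decay_ge0 D_le) _.
have -> : gap_decay * (L ^+ 2 / (2 * rho)) = (rho / (m + rho)) ^+ 2 * (1 - beta) ^+ 2 / 16.
  by rewrite /gap_decay; field; rewrite lipschitz_neq0 !gt_eqF.
have : rho / (m + rho) <= 1 by rewrite ler_pdivrMr // mul1r lerDr.
have : 0 <= rho / (m + rho) by rewrite divr_ge0 ?ltW.
nra.
Qed.

Lemma scaled_gap_le_aggregate_bound : rho * ((1 - beta) * D) <= aggregate_bound.
Proof.
move: (rho_gt0) (beta_gt0) (beta_lt1) (D_gt0) => rho_pos beta_pos beta_lt D_pos.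
have : rho * ((1 - beta) * D) <= L ^+ 2 / 2.
  by move: D_le; rewrite ler_pdivlMr ?mulr_gt0 //; nra.
have : L ^+ 2 / 2 <= aggregate_bound.
  have rho_le : rho <= m + rho by rewrite lerDr.
  have : rho ^+ 2 <= (m + rho) ^+ 2 by nra.
  rewrite /aggregate_bound ler_pdivlMr ?exprn_gt0 //; nra.
lra.
Qed.

End GapBounds.

Section Call.
Variables (xk : vec) (g : nat -> vec) (ft : nat -> vec -> R) (z : nat -> vec).
Hypothesis trace : pd_trace f m beta rho xk g ft z.

Definition loop_runs (T : nat) : Prop :=
  forall j, (1 <= j < T)%N -> pd_continue f m beta xk ft z j.

Definition model_valid (j : nat) : Prop :=
  [/\ convex_fun (ft j), (forall y, ft j y <= f y + m / 2 * vnorm (y - xk) ^+ 2) &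
      is_prox_min (ft j) rho xk (z j.+1)].

Definition prox_gap (j : nat) : R :=
  f xk - ft j (z j.+1) - rho / 2 * dot (xk - z j.+1) (xk - z j.+1).

Lemma loop_runsW T T' : (T' <= T)%N -> loop_runs T -> loop_runs T'.
Proof.
by move=> le_T runs j /andP[j_ge1 j_lt]; apply: runs; rewrite j_ge1 (leq_trans j_lt).
Qed.

Lemma model_valid_of_trace j : (1 <= j)%N -> loop_runs j -> model_valid j.
Proof.
case: trace => g1_sub ft1E z2_min step; case: j => [//|[_ _|j _ runs]].
  split=> // [a b t t_ge0 t_le1 | y]; rewrite !ft1E; last by have := g1_sub y; lra.
  have -> : t *: a + (1 - t) *: b - xk = t *: (a - xk) + (1 - t) *: (b - xk).
    by apply/rowP => i; rewrite !mxE; ring.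
  by rewrite (dotDr (t *: _)) !dotZr; lra.
by have [[_ cvx] le_f _ _ z_min] := step j.+1 isT runs.
Qed.

Lemma model_valid_cut j : model_valid j ->
  forall y, ft j (z j.+1) + dot (rho *: (xk - z j.+1)) (y - z j.+1)
              <= f y + m / 2 * dot (y - xk) (y - xk).
Proof.
case=> cvx le_f z_min y; rewrite -vnorm_sq.
exact: le_trans (prox_min_subgrad rho_gt0 cvx z_min y) (le_f y).
Qed.

Lemma prox_gap_ge j : model_valid j ->
  rho / 2 * dot (xk - z j.+1) (xk - z j.+1) <= prox_gap j.
Proof.
move/model_valid_cut/(_ xk); rewrite subrr dot0l mulr0 addr0 dotZl /prox_gap; lra.
Qed.

Lemma prox_gap1_le : prox_gap 1 <= L ^+ 2 / (2 * rho).
Proof.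
case: trace => g1_sub ft1E _ _; rewrite /prox_gap ft1E.
have g1_le := subdiff_lipschitz_dot_le m_ge0 f_lip g1_sub.
set e := z 2%N - xk; set g1 := g 1%N.
have -> : xk - z 2%N = - e by rewrite opprB.
rewrite dotNN; have := dot_ge0 (g1 + rho *: e).
rewrite dot_sqD !dotZl !dotZr => sq_ge0.
rewrite ler_pdivlMr ?mulr_gt0 //.
nra.
Qed.

Lemma prox_gap_large j : model_valid j -> ~ inexact_stationary m eta eps f xk ->
  eta ^+ 2 / (2 * rho) < prox_gap j \/ eps < prox_gap j.
Proof.
move=> valid nonstat; have cut := model_valid_cut valid.
move: (rho_gt0) (eta_gt0) (eps_gt0) => rho_pos eta_pos eps_pos.
have gap_ge := prox_gap_ge valid.
set u := xk - z j.+1 in cut gap_ge *; set r2 := dot u u in gap_ge *.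
have r2_ge0 : 0 <= r2 by apply: dot_ge0.
have [step_small|step_large] := lerP (rho ^+ 2 * r2) (eta ^+ 2); last first.
  by left; rewrite ltr_pdivrMr; nra.
have [err_small|err_large] := lerP (prox_gap j - rho / 2 * r2) eps; last first.
  by right; nra.
(* Otherwise the proximal step [rho (xk - z j.+1)] certifies stationarity. *)
exfalso; apply: nonstat => d d_gt0; exists (rho *: u); split.
  move=> y; have := cut y.
  have -> : y - z j.+1 = (y - xk) + u by rewrite /u; apply/rowP => i; rewrite !mxE; ring.
  by rewrite dotDr (dotZl _ u u) -/r2 vnorm_sq /prox_gap -/u -/r2 in err_small *; lra.
suff : vnorm (rho *: u) <= eta by lra.
by apply: vnorm_le_sq; [exact: ltW | rewrite dotZl dotZr mulrA -expr2].
Qed.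

(* The new model dominates both the aggregated cut of the old model and the
   cut at the trial point, so its proximal value beats every convex
   combination of the two. *)
Lemma prox_gap_drop j : (1 <= j)%N -> loop_runs j.+1 -> prox_gap j <= L ^+ 2 / (2 * rho) ->
  forall lam, 0 <= lam -> lam <= 1 ->
  lam * ((1 - beta) * prox_gap j) - lam ^+ 2 * aggregate_bound / (2 * rho)
    <= prox_gap j - prox_gap j.+1.
Proof.
move=> j_ge1 runs gap_le lam lam_ge0 lam_le1.
move: (rho_gt0) (beta_gt0) (beta_lt1) => rho_pos beta_pos beta_lt.
have gap_ge := prox_gap_ge (model_valid_of_trace j_ge1 (loop_runsW (leqnSn j) runs)).
have [[sub _] _ cut1 cut2 _] := (let: And4 _ _ _ step := trace in step) j j_ge1 runs.
have cont : pd_continue f m beta xk ft z j by apply: runs; rewrite j_ge1 ltnSn.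
have zx_dot := dot_subC (z j.+1) xk.
have step_le : rho ^+ 2 * dot (xk - z j.+1) (xk - z j.+1) <= L ^+ 2.
  by move: gap_ge gap_le; rewrite ler_pdivlMr ?mulr_gt0 //; nra.
have := shifted_subgrad_dot_le m_ge0 rho_pos (subdiff_lipschitz_dot_le m_ge0 f_lip sub).
rewrite zx_dot => /(_ step_le) w_le.
have := prox_two_cuts rho_pos lam_ge0 lam_le1 (cut1 (z j.+2)) (cut2 (z j.+2)).
move: cont; rewrite /pd_continue vnorm_sq zx_dot /prox_gap.
rewrite /prox_gap in gap_ge.
set a0 := ft j (z j.+1) in gap_ge *.
set r2 := dot (xk - z j.+1) (xk - z j.+1) in gap_ge *.
set c := f (z j.+1) + m / 2 * r2 => cont.
have : lam * ((1 - beta) * (f xk - a0 - rho / 2 * r2)) <= lam * (c - a0).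
  apply: ler_wpM2l => //.
  have : 0 <= (1 - beta) * (rho / 2 * r2) by rewrite !mulr_ge0 ?dot_ge0 //; lra.
  nra.
have : lam ^+ 2 * dot (g j.+1 + rho *: (z j.+1 - xk)) (g j.+1 + rho *: (z j.+1 - xk))
         / (2 * rho) <= lam ^+ 2 * aggregate_bound / (2 * rho).
  by rewrite ler_pM2r ?invr_gt0 ?mulr_gt0 // ler_wpM2l ?sqr_ge0.
lra.
Qed.

Lemma prox_gap_succ_le j : (1 <= j)%N -> loop_runs j.+1 ->
  prox_gap j <= L ^+ 2 / (2 * rho) -> 0 < prox_gap j ->
  prox_gap j.+1 <= prox_gap j - gap_decay * prox_gap j ^+ 2.
Proof.
move=> j_ge1 runs gap_le gap_gt0; move: (rho_gt0) (beta_lt1) => rho_pos beta_lt.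
have a_gt0 : 0 < (1 - beta) * prox_gap j by rewrite mulr_gt0 // subr_gt0.
have := quadratic_max_lower_bound rho_pos a_gt0
  (scaled_gap_le_aggregate_bound gap_gt0 gap_le) (prox_gap_drop j_ge1 runs gap_le).
have -> : rho * ((1 - beta) * prox_gap j) ^+ 2 / (2 * aggregate_bound)
          = gap_decay * prox_gap j ^+ 2.
  rewrite /aggregate_bound /gap_decay; field.
  by rewrite (lipschitz_neq0 gap_gt0 gap_le) !gt_eqF // ltr_pwDr.
lra.
Qed.

Section NonStationary.
Hypothesis xk_nonstat : ~ inexact_stationary m eta eps f xk.

Section Loop.
Variable T : nat.
Hypothesis runs : loop_runs T.

Lemma prox_gap_gt0_inv_lt j : (1 <= j <= T)%N ->
  0 < prox_gap j /\ 1 / prox_gap j < Num.max (2 * rho / eta ^+ 2) (1 / eps).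
Proof.
move=> /andP[j_ge1 j_le].
have valid := model_valid_of_trace j_ge1 (loop_runsW j_le runs).
have a_gt0 : 0 < eta ^+ 2 / (2 * rho) by apply: divr_gt0; [apply: exprn_gt0 | apply: mulr_gt0].
have large := prox_gap_large valid xk_nonstat.
split; first by case: large; apply: lt_trans.
have -> : 2 * rho / eta ^+ 2 = 1 / (eta ^+ 2 / (2 * rho)).
  by field; rewrite !gt_eqF ?exprn_gt0 //.
exact: inv_lt_max_inv.
Qed.

Lemma prox_gap_le j : (1 <= j <= T)%N -> prox_gap j <= L ^+ 2 / (2 * rho).
Proof.
elim: j => [//|[_ _|j IH /andP[_ j_lt]]]; first exact: prox_gap1_le.
have j_le : (1 <= j.+1 <= T)%N by rewrite /= ltnW.
have decay_ge0 : 0 <= gap_decay * prox_gap j.+1 ^+ 2.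
  by rewrite mulr_ge0 ?sqr_ge0 ?gap_decay_ge0.
have := prox_gap_succ_le (isT : (1 <= j.+1)%N) (loop_runsW j_lt runs) (IH j_le)
  (proj1 (prox_gap_gt0_inv_lt j_le)).
have := IH j_le; lra.
Qed.

Lemma inv_prox_gap_ge : (1 <= T)%N -> 1 / prox_gap 1 + T.-1%:R * gap_decay <= 1 / prox_gap T.
Proof.
move=> T_ge1; rewrite -{2}(prednK T_ge1).
have le_T j : (j <= T.-1)%N -> (1 <= j)%N -> (1 <= j <= T)%N.
  by move=> j_le ->; rewrite (leq_trans j_le) ?leq_pred.
apply: inv_iter_quadratic_decrease gap_decay_ge0 _ _.
  by move=> j; rewrite prednK //; case/prox_gap_gt0_inv_lt.
move=> j /andP[j_ge1 j_lt]; have j_le := le_T j j_lt j_ge1.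
apply: prox_gap_succ_le => //; last by case: (prox_gap_gt0_inv_lt j_le).
  by apply: loop_runsW runs; rewrite -(prednK T_ge1) ltnS.
exact: prox_gap_le.
Qed.

(* [1 / prox_gap j] grows by [gap_decay] per step but stays below the
   nonstationarity threshold. *)
Lemma loop_length_le : (1 <= T)%N -> T%:R <= eval_bound.
Proof.
move=> T_ge1; move: (rho_gt0) (beta_lt1) => rho_pos beta_lt.
rewrite /eval_bound; set M := Num.max _ _.
have [D1_gt0 _] := prox_gap_gt0_inv_lt (j := 1) T_ge1.
have [_ DT_lt] : 0 < prox_gap T /\ 1 / prox_gap T < M.
  by apply: prox_gap_gt0_inv_lt; rewrite T_ge1 leqnn.
have D1_le := prox_gap1_le.
have decay_gt0 := gap_decay_gt0 D1_gt0 D1_le.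
have := gap_decay_le_inv D1_gt0 D1_le; have := inv_prox_gap_ge T_ge1.
have -> : 8 / ((1 - beta) ^+ 2 * rho) * (1 + m / rho) ^+ 2 * L ^+ 2 * M = M / gap_decay.
  rewrite /gap_decay; field.
  by rewrite (lipschitz_neq0 D1_gt0 D1_le) !gt_eqF ?subr_gt0 ?m_add_rho_gt0.
move=> count decay_le.
rewrite ler_pdivlMr // -(prednK T_ge1) -natr1 mulrDl mul1r; lra.
Qed.

End Loop.

Lemma loop_terminates : pd_terminates f m beta xk ft z.
Proof.
have := archi_boundP eval_bound_ge0; set N := Num.Def.archi_bound _ => bound_lt.
case: (all_or_first_counterexample (pd_continue f m beta xk ft z) N) => [runs|[T]].
  by exfalso; have := loop_length_le (T := N.+1) runs isT; rewrite -natr1; lra.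
by case=> /andP[T_ge1 _] stop runs; exists T.
Qed.

End NonStationary.

(* A serious step either moves far, and then decreases [f] through the descent
   test, or leaves a small model error; otherwise [z T.+1] would be stationary. *)
Lemma exit_decrease T :
  pd_exits_at f m beta xk ft z T -> ~ inexact_stationary m eta eps f (z T.+1) ->
  (m + beta * rho) * eta ^+ 2 / (2 * (m + rho) ^+ 2) < f xk - f (z T.+1)
  \/ beta * eps / (1 - beta) < f xk - f (z T.+1).
Proof.
case=> T_ge1 stop runs nonstat.
move: (m_ge0) (rho_gt0) (beta_gt0) (beta_lt1) (eps_gt0).
move=> m_nneg rho_pos beta_pos beta_lt eps_pos.
have valid := model_valid_of_trace T_ge1 runs.
have cut := model_valid_cut valid; have gap_ge := prox_gap_ge valid.
have alpha_gt0 := m_add_rho_gt0.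
have descent : beta * (f xk - ft T (z T.+1))
    <= f xk - (f (z T.+1) + m / 2 * dot (xk - z T.+1) (xk - z T.+1)).
  by rewrite leNgt dot_subC -vnorm_sq; apply/negP.
move: gap_ge descent; rewrite /prox_gap.
set a0 := ft T (z T.+1); set r2 := dot (xk - z T.+1) (xk - z T.+1).
move=> gap_ge descent; have r2_ge0 : 0 <= r2 by apply: dot_ge0.
have [far|near] := ltrP (eta ^+ 2) ((m + rho) ^+ 2 * r2).
  left; rewrite ltr_pdivrMr ?mulr_gt0 ?exprn_gt0 //.
  have mbr_gt0 : 0 < m + beta * rho by rewrite ltr_wpDl ?mulr_gt0.
  have far' : (m + beta * rho) * eta ^+ 2 < (m + beta * rho) * ((m + rho) ^+ 2 * r2).
    by rewrite ltr_pM2l.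
  have : beta * (rho * r2) <= beta * (f xk - a0) by apply: ler_wpM2l; [exact: ltW | lra].
  have : 0 <= beta * (rho * r2) by rewrite !mulr_ge0 // ltW.
  move=> h1 h2; have : (m + beta * rho) * r2 <= 2 * (f xk - f (z T.+1)) by lra.
  move/(ler_wpM2l (sqr_ge0 (m + rho))); nra.
have [err_large|err_small] := ltrP eps (f (z T.+1) + m / 2 * r2 - a0).
  right; rewrite ltr_pdivrMr ?subr_gt0 //.
  have : beta * eps < beta * (f (z T.+1) + m / 2 * r2 - a0) by rewrite ltr_pM2l.
  have m_r2 : 0 <= m / 2 * r2 by apply: mulr_ge0 => //; lra.
  have : 0 <= (1 - beta) * (m / 2 * r2) by apply: mulr_ge0 => //; lra.
  nra.
by case: nonstat; apply: prox_cut_inexact_stationary cut near err_small.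
Qed.

End Call.

Section Run.
Variables (x1 : vec) (x : nat -> vec) (g : nat -> nat -> vec)
  (ft : nat -> nat -> vec -> R) (z : nat -> nat -> vec) (T : nat -> nat).
Hypothesis run : prox_descent_run f m beta rho x1 x g ft z T.

Let descent_rate :=
  2 * (m + rho) ^+ 2 / (m + beta * rho) / eta ^+ 2 + (1 - beta) / beta / eps.

Lemma run_call_terminates k : (1 <= k)%N ->
  ~ inexact_stationary m eta eps f (x k) -> pd_terminates f m beta (x k) (ft k) (z k).
Proof.
move=> k_ge1 nonstat; have [trace _] := proj2 run k k_ge1.
exact: loop_terminates trace nonstat.
Qed.

Lemma run_call_length_le k : (1 <= k)%N -> ~ inexact_stationary m eta eps f (x k) ->
  (T k)%:R <= eval_bound.
Proof.
move=> k_ge1 nonstat; have [trace exits] := proj2 run k k_ge1.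
have [[T_ge1 _ runs] _] := exits (loop_terminates trace nonstat).
by have := loop_length_le trace nonstat runs T_ge1.
Qed.

Lemma run_step_decrease k : (1 <= k)%N ->
  ~ inexact_stationary m eta eps f (x k) -> ~ inexact_stationary m eta eps f (x k.+1) ->
  1 < (f (x k) - f (x k.+1)) * descent_rate.
Proof.
move=> k_ge1 nonstat nonstat'; have [trace exits] := proj2 run k k_ge1.
have [exit xE] := exits (loop_terminates trace nonstat).
rewrite xE in nonstat' *; have decrease := exit_decrease trace exit nonstat'.
move: (rho_gt0) (beta_gt0) (beta_lt1) (eta_gt0) (eps_gt0) => rho_pos beta_pos beta_lt ? ?.
have alpha_gt0 := m_add_rho_gt0.
have mbr_gt0 : 0 < m + beta * rho by rewrite ltr_wpDl ?mulr_gt0.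
have -> : descent_rate = 1 / ((m + beta * rho) * eta ^+ 2 / (2 * (m + rho) ^+ 2))
                         + 1 / (beta * eps / (1 - beta)).
  by rewrite /descent_rate; field; rewrite !gt_eqF ?subr_gt0 ?exprn_gt0.
apply: lt_mul_add_inv decrease; rewrite ?divr_gt0 ?mulr_gt0 ?exprn_gt0 ?subr_gt0 //.
Qed.

Lemma descent_rate_ge0 : 0 <= descent_rate.
Proof.
move: (rho_gt0) (beta_gt0) (beta_lt1) (eps_gt0) => rho_pos beta_pos beta_lt eps_pos.
have mbr_gt0 : 0 < m + beta * rho by rewrite ltr_wpDl ?mulr_gt0.
apply: addr_ge0; last by apply: divr_ge0; [apply: divr_ge0 | ]; lra.
apply: divr_ge0; last exact: sqr_ge0.
by apply: divr_ge0; [apply: mulr_ge0; [lra | apply: sqr_ge0] | lra].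
Qed.

Lemma run_value_decrease k :
  (forall i, (1 <= i <= k.+1)%N -> ~ inexact_stationary m eta eps f (x i)) ->
  k%:R <= (f x1 - f (x k.+1)) * descent_rate.
Proof.
elim: k => [|k IH] nonstat; first by rewrite (proj1 run) subrr mul0r.
have : k%:R <= (f x1 - f (x k.+1)) * descent_rate.
  by apply: IH => i /andP[i_ge1 i_le]; apply: nonstat; rewrite i_ge1 leqW.
have := run_step_decrease (isT : (1 <= k.+1)%N) (nonstat k.+1 (leqW (leqnn _)))
  (nonstat k.+2 (leqnn _)).
rewrite -natr1 !mulrBl; lra.
Qed.

Lemma run_first_stationary fstar : (forall y, fstar <= f y) ->
  exists ks, [/\ (1 <= ks)%N, inexact_stationary m eta eps f (x ks),
    forall i, (1 <= i < ks)%N -> ~ inexact_stationary m eta eps f (x i) &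
    ks.-1%:R <= (f x1 - fstar) * descent_rate + 1].
Proof.
move=> fstar_le; have rate_ge0 := descent_rate_ge0.
have bound_ge0 : 0 <= (f x1 - fstar) * descent_rate.
  by rewrite mulr_ge0 // subr_ge0.
have value_le k : (f x1 - f (x k)) * descent_rate <= (f x1 - fstar) * descent_rate.
  by rewrite ler_wpM2r // lerD2l lerN2.
have := archi_boundP bound_ge0; set N := Num.Def.archi_bound _ => N_gt.
case: (all_or_first_counterexample (fun i => ~ inexact_stationary m eta eps f (x i)) N.+1)
  => [nonstat|[ks [/andP[ks_ge1 _] stat before]]].
  by have := run_value_decrease nonstat; have := value_le N.+1; lra.
exists ks; split=> //; first exact: NNPP.
case: ks ks_ge1 before {stat} => [//|[_ _|k _ before]]; first by rewrite /=; lra.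
have : k%:R <= (f x1 - f (x k.+1)) * descent_rate.
  by apply: run_value_decrease => i /andP[i_ge1 i_le]; apply: before; rewrite i_ge1.
by have := value_le k.+1; rewrite -natr1 /=; lra.
Qed.

Lemma run_evaluations_le ks K :
  (forall i, (1 <= i < ks)%N -> ~ inexact_stationary m eta eps f (x i)) -> ks.-1%:R <= K ->
  \sum_(1 <= i < ks) (T i)%:R
    <= 8 * K / ((1 - beta) ^+ 2 * rho) * (1 + m / rho) ^+ 2 * L ^+ 2
       * Num.max (2 * rho / eta ^+ 2) (1 / eps).
Proof.
move=> before ks_le; apply: le_trans (_ : ks.-1%:R * eval_bound <= _).
  rewrite -subn1 mulr_natl -sumr_const_nat big_nat [X in _ <= X]big_nat.
  apply: ler_sum => i i_in; apply: run_call_length_le (before i i_in).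
  by case/andP: i_in.
have -> : 8 * K / ((1 - beta) ^+ 2 * rho) * (1 + m / rho) ^+ 2 * L ^+ 2
            * Num.max (2 * rho / eta ^+ 2) (1 / eps) = K * eval_bound.
  by rewrite /eval_bound; ring.
by rewrite ler_wpM2r // eval_bound_ge0.
Qed.

End Run.

End ProxDescent.

Theorem mainTheorem10 (R : realType) (n : nat) (f : 'rV[R]_n -> R)
    (m L fstar beta rho eta eps : R) (x1 : 'rV[R]_n)
    (x : nat -> 'rV[R]_n) (g : nat -> nat -> 'rV[R]_n)
    (ft : nat -> nat -> 'rV[R]_n -> R) (z : nat -> nat -> 'rV[R]_n)
    (T : nat -> nat) :
  0 <= m -> weakly_convex m f -> lipschitz L f ->
  (forall y, fstar <= f y) -> (forall e, 0 < e -> exists y, f y < fstar + e) ->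
  0 < beta -> beta < 1 -> 0 < rho -> 0 < eta -> 0 < eps ->
  prox_descent_run f m beta rho x1 x g ft z T ->
  let alpha := m + rho in
  let Kmax : int := Num.ceil (2 * alpha ^+ 2 * (f x1 - fstar) / (m + beta * rho) / eta ^+ 2
                       + (1 - beta) * (f x1 - fstar) / beta / eps + 1) in
  exists kstar : nat,
    [/\ (1 <= kstar)%N,
        inexact_stationary m eta eps f (x kstar),
        (forall i, (1 <= i < kstar)%N ->
           ~ inexact_stationary m eta eps f (x i) /\
           pd_terminates f m beta (x i) (ft i) (z i)),
        (kstar%:R <= Kmax%:~R + 1 :> R) &
        \sum_(1 <= i < kstar) (T i)%:R
          <= 8 * Kmax%:~R / ((1 - beta) ^+ 2 * rho) * (1 + m / rho) ^+ 2 * L ^+ 2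
             * Num.max (2 * rho / eta ^+ 2) (1 / eps)].
Proof.
move=> m_ge0 _ f_lip fstar_le _ beta_gt0 beta_lt1 rho_gt0 eta_gt0 eps_gt0 run alpha Kmax.
have [ks [ks_ge1 stat_ks before ks_le]] :=
  run_first_stationary m_ge0 f_lip rho_gt0 beta_gt0 beta_lt1 eta_gt0 eps_gt0 run fstar_le.
have Kmax_ge : (f x1 - fstar) * (2 * (m + rho) ^+ 2 / (m + beta * rho) / eta ^+ 2
                 + (1 - beta) / beta / eps) + 1 <= Kmax%:~R.
  apply: le_trans (ceil_ge _); rewrite le_eqVlt; apply/orP; left; apply/eqP.
  have mbr_gt0 : 0 < m + beta * rho by rewrite ltr_wpDl ?mulr_gt0 // ltW.
  by rewrite /alpha; field; rewrite !gt_eqF ?exprn_gt0.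
have ks_le_Kmax : ks.-1%:R <= Kmax%:~R := le_trans ks_le Kmax_ge.
exists ks; split=> //.
- move=> i /[dup] /andP[i_ge1 _] /before nonstat; split=> //.
  have := run_call_terminates m_ge0 f_lip rho_gt0 beta_gt0 beta_lt1 eta_gt0 eps_gt0 run.
  by apply.
- by rewrite -(prednK ks_ge1) -natr1 lerD2r.
have := run_evaluations_le m_ge0 f_lip rho_gt0 beta_gt0 beta_lt1 eta_gt0 eps_gt0 run.
by apply.
Qed.
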